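(* Let $c\ge2$ and let $F$ be a standard $c$-coloring with associated partially looped coloring $E_F$. Then for every color $i\in[c]$: every embedding of $K^i_{\max(c+1,6)}$ into $E_F$ maps all vertices to a single vertex of $E_F$; and every embedding of $K_3^i$ into $E_F$ whose image contains a vertex of $\mathcal X_F$ maps all three vertices to a single vertex.
   Context: A $c$-coloring $F$ is a map from the $2$-subsets of a finite set $V(F)$ to $[c]$. $F$ is standard if it contains no induced copy of any coloring in $\hat K_{3,1}$ or $\hat K_{3,3}$, where: $\hat K_{3,1}$ is the family of $4$-vertex colorings consisting of a monochromatic triangle of color $a$ plus a vertex joined to it by either (two edges of color $a$ and one of color $b\ne a$), or (three edges of three distinct colors, one being $a$), or (two edges of color $b$ and one of color $d$, with $a,b,d$ distinct); $\hat K_{3,3}$ is the family of $6$-vertex colorings consisting of two disjoint triangles monochromatic in colors $a,b$ with all nine edges between them of color $d$, $a,b,d$ distinct. $\mathcal X_F$ is the set of inclusion-maximal vertex sets of size at least $\max(c+1,6)$ all of whose pairs have one color; $Y_F=\{\{y\}: y\in V(F)\setminus\bigcup_{X\in\mathcal X_F}X\}$. (For standard $F$, for each $X\in\mathcal X_F$ and $y$ outside $X$ all but at most one edge of $y\ast X$ have a common color, and between distinct $X_1,X_2\in\mathcal X_F$ all but a matching or a star-free remainder of $X_1\ast X_2$ have a common color; so the majority color below is well defined.) $E_F$ is the coloring on vertex set $\mathcal X_F\sqcup Y_F$ of pairs $\{v_1,v_2\}$ given by: no loop at elements of $Y_F$; $E_F(\{\{y_1\},\{y_2\}\})=F(\{y_1,y_2\})$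 for distinct elements of $Y_F$; the loop at $X\in\mathcal X_F$ gets the color of $F[X]$; every other pair $\{v_1,v_2\}$ gets the majority color among the edges of $v_1\ast v_2$ in $F$. A map $\varphi:[t]\to V(E_F)$ embeds $K_t^i$ (all edges color $i$) if $E_F(\{\varphi(u),\varphi(w)\})$ is defined and equals $i$ for all distinct $u,w\in[t]$ (in particular two vertices may share an image only if that image has a loop of color $i$). *)

From mathcomp Require Import all_boot.
Set Implicit Arguments. Unset Strict Implicit. Unset Printing Implicit Defensive.

(* A c-coloring of the 2-subsets of a finite vertex type T: F : {set T} -> 'I_c.
   Only the values of F on 2-element sets [set x; y] (x != y) are meaningful.
   Colors [c] = {1..c} are represented by 'I_c. *)

Section Coloring.
Variables (T : finType) (c : nat) (F : {set T} -> 'I_c).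

Definition col (x y : T) : 'I_c := F [set x; y].

(* Pattern of the three edges from the extra vertex in \hat K_{3,1},
   where a is the triangle color and p q r the colors of w-x, w-y, w-z. *)
Definition K31_pattern (a p q r : 'I_c) : bool :=
  [|| [&& p == a, q == a & r != a], [&& p == a, r == a & q != a]
    | [&& q == a, r == a & p != a]]
  || [&& p != q, q != r, p != r & [|| p == a, q == a | r == a]]
  || [|| [&& p == q, p != a, r != a & r != p],
         [&& p == r, p != a, q != a & q != p]
       | [&& q == r, q != a, p != a & p != q]].

Definition has_K31 : Prop :=
  exists x y z w : T,
    [/\ uniq [:: x; y; z; w],
        col x y = col y z, col x y = col x z &
        K31_pattern (col x y) (col w x) (col w y) (col w z)].

Definition has_K33 : Prop :=
  exists (x1 x2 x3 y1 y2 y3 : T) (a b d : 'I_c),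
    [/\ uniq [:: x1; x2; x3; y1; y2; y3], uniq [:: a; b; d],
        [/\ col x1 x2 = a, col x1 x3 = a & col x2 x3 = a],
        [/\ col y1 y2 = b, col y1 y3 = b & col y2 y3 = b] &
        (forall x y, x \in [:: x1; x2; x3] -> y \in [:: y1; y2; y3] -> col x y = d)].

Definition standard : Prop := ~ has_K31 /\ ~ has_K33.

Definition mono (X : {set T}) (i : 'I_c) : Prop :=
  forall x y, x \in X -> y \in X -> x != y -> col x y = i.

Definition bigsize : nat := maxn c.+1 6.

Definition inXF (X : {set T}) : Prop :=
  [/\ bigsize <= #|X|, exists i, mono X i &
      forall Y : {set T}, X \subset Y -> bigsize <= #|Y| -> (exists i, mono Y i) -> Y = X].

Definition inYF (S : {set T}) : Prop :=
  exists y, S = [set y] /\ forall X, inXF X -> y \notin X.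

(* vertices of E_F: elements of \mathcal X_F \sqcup Y_F (these are disjoint as
   families of subsets of T, since elements of \mathcal X_F have size >= 6) *)
Definition inVE (S : {set T}) : Prop := inXF S \/ inYF S.

Definition cross_edges (v1 v2 : {set T}) : {set {set T}} :=
  [set [set a; b] | a in v1, b in v2 & a != b].

Definition majority (v1 v2 : {set T}) (i : 'I_c) : Prop :=
  #|cross_edges v1 v2| < 2 * #|[set e in cross_edges v1 v2 | F e == i]|.

(* E_F({v1,v2}) is defined and equals i *)
Definition EFcol (v1 v2 : {set T}) (i : 'I_c) : Prop :=
  [/\ inVE v1, inVE v2 &
     [\/ v1 = v2 /\ inXF v1 /\ mono v1 i,
         [/\ v1 <> v2, inYF v1, inYF v2 & F (v1 :|: v2) = i]
       | [/\ v1 <> v2, ~ (inYF v1 /\ inYF v2) & majority v1 v2 i]]].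

Definition embeds (i : 'I_c) (t : nat) (phi : 'I_t -> {set T}) : Prop :=
  forall u w : 'I_t, u != w -> EFcol (phi u) (phi w) i.

End Coloring.

From mathcomp Require Import all_boot zify.
From Stdlib Require Import Classical_Prop.
Set Implicit Arguments. Unset Strict Implicit. Unset Printing Implicit Defensive.

(* Its key
   consequence: a vertex y outside a maximal monochromatic set X (of color j)
   sees X in a color b <> j except for at most one j-edge.  Hence two members
   of \mathcal X_F share at most one vertex, and a majority color i <> j
   between X and another vertex v of E_F is witnessed by a vertex of v that
   sees all but one vertex of X in color i.  An i-edge between two such
   witnesses completes an induced \hat K_{3,1} on a further pair of X, which
   rules out i-triangles of E_F through a member of \mathcal X_F; counting
   the edges of X * v rules out majority color j.  A large clique of
   singletons would be a monochromatic set of size max(c+1,6), hence inside a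
   member of \mathcal X_F, which singletons avoid. *)

Lemma memNneq (T : eqType) (A : {pred T}) x y : x \in A -> y \notin A -> x != y.
Proof. by move=> xA; apply: contraNneq => <-. Qed.

Lemma exists_notin (T : finType) (A : {set T}) (s : seq T) n :
  n <= #|A| -> size s < n -> exists2 x, x \in A & x \notin s.
Proof.
move=> leA lts; case: (boolP (A \subset [set x | x \in s])) => [|/subsetPn[x xA]].
  move/subset_leq_card; rewrite cardsE => /leq_trans/(_ (card_size s)).
  by rewrite leqNgt (leq_trans lts leA).
by rewrite inE => xs; exists x.
Qed.

Lemma pigeonhole_ord (T : finType) n (f : T -> 'I_n) (A : {set T}) :
  n < #|A| -> exists x1 x2, [/\ x1 \in A, x2 \in A, x1 != x2 & f x1 = f x2].
Proof.
move=> ltnA; apply: NNPP => noColl.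
suff /leq_card_in : {in A &, injective f} by rewrite card_ord leqNgt ltnA.
move=> x1 x2 x1A x2A fx12; apply/eqP/contraT => n12; exfalso.
by apply: noColl; exists x1, x2.
Qed.

Lemma card_cross_edges_setD (T : finType) (X v : {set T}) :
  #|X| * #|v :\: X| <= #|cross_edges X v|.
Proof.
have inj : {in setX X (v :\: X) &, injective (fun p : T * T => [set p.1; p.2])}.
  move=> [a b] [a' b'] /setXP[aX /setDP[_ bX]] /setXP[a'X _] /= eab.
  have /set2P[ba'|bb'] : b \in [set a'; b'] by rewrite -eab set22.
    by move: bX; rewrite ba' a'X.
  subst b'; have /set2P[<-//|ab] : a \in [set a'; b] by rewrite -eab set21.
  by move: bX; rewrite -ab aX.
rewrite -cardsX -(card_in_imset inj); apply/subset_leq_card/subsetP => e.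
case/imsetP=> -[a b] /setXP[aX /setDP[bv bX]] -> /=.
by apply/imset2P; exists a b; rewrite // inE bv (memNneq aX bX).
Qed.

Lemma K31_pattern_aab c (a p q r : 'I_c) :
  p = a -> q = a -> r != a -> K31_pattern a p q r.
Proof. by move=> -> -> ra; rewrite /K31_pattern !eqxx ra. Qed.

Lemma K31_pattern_bbd c (a b d : 'I_c) :
  b != a -> d != a -> d != b -> K31_pattern a b b d.
Proof. by move=> ba da db; rewrite /K31_pattern eqxx ba da db !orbT. Qed.

Section Coloring.
Variables (T : finType) (c : nat) (F : {set T} -> 'I_c).
Implicit Types (X Y S v w : {set T}) (x y z : T) (i j : 'I_c).

Definition almost_col X i y := exists e, forall x, x \in X -> x != e -> col F y x = i.

Lemma col_sym x y : col F x y = col F y x.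
Proof. by rewrite /col setUC. Qed.

Lemma cross_edgesC v w : cross_edges v w = cross_edges w v.
Proof.
suff sub v1 v2 : cross_edges v1 v2 \subset cross_edges v2 v1.
  by apply/eqP; rewrite eqEsubset !sub.
apply/subsetP => e /imset2P[a b av1]; rewrite inE => /andP[bv2 nab] ->.
by apply/imset2P; exists b a; rewrite ?inE ?av1 1?eq_sym // setUC.
Qed.

Lemma majority_sym v w i : majority F v w i -> majority F w v i.
Proof. by rewrite /majority cross_edgesC. Qed.

Lemma EFcol_sym v w i : EFcol F v w i -> EFcol F w v i.
Proof.
case=> hv hw [[<- [hX mX]]|[nvw yv yw Fvw]|[nvw nY m]]; split=> //.
- exact: Or31.
- by apply: Or32; split=> //; [exact: not_eq_sym | rewrite setUC].
- by apply: Or33; split; [exact: not_eq_sym | case=> ? ?; apply: nY | exact: majority_sym].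
Qed.

Lemma EFcol_VE v w i : EFcol F v w i -> inVE F v /\ inVE F w.
Proof. by case. Qed.

Lemma EFcol_loop v i : EFcol F v v i -> inXF F v /\ mono F v i.
Proof. by case=> _ _ [[_ []]|[]|[]]. Qed.

Lemma EFcol_YF v w i :
  inYF F v -> inYF F w -> v <> w -> EFcol F v w i -> F (v :|: w) = i.
Proof. by move=> yv yw nvw [_ _ [[]|[]|[_ []]]]. Qed.

Lemma XF_card X : inXF F X -> 6 <= #|X|.
Proof. by case=> sz _ _; apply: leq_trans sz; apply: leq_maxr. Qed.

Lemma XF_card_gt X : inXF F X -> c < #|X|.
Proof. by case=> sz _ _; apply: leq_trans sz; apply: leq_maxl. Qed.

Lemma XF_exists_notin X (s : seq T) :
  inXF F X -> size s < 6 -> exists2 x, x \in X & x \notin s.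
Proof. by move/XF_card; apply: exists_notin. Qed.

Lemma XF_notYF X : inXF F X -> ~ inYF F X.
Proof. by move=> hX [y [eX yXF]]; move: (yXF _ hX); rewrite eX set11. Qed.

Lemma EFcol_majority v w i : inXF F v -> v <> w -> EFcol F v w i -> majority F v w i.
Proof. by move=> hv nvw [_ _ [[]|[_ /(XF_notYF hv)]|[]]]. Qed.

Lemma mono_setU1 X j y :
  mono F X j -> (forall x, x \in X -> col F y x = j) -> mono F (y |: X) j.
Proof.
move=> mX yX a b; rewrite !inE => /orP[/eqP->|aX] /orP[/eqP->|bX] nab.
- by rewrite eqxx in nab.
- exact: yX.
- by rewrite col_sym; apply: yX.
- exact: mX.
Qed.

Lemma XF_maximal X j y : inXF F X -> mono F (y |: X) j -> y \in X.
Proof.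
case=> sz _ maxX myX.
have eX : y |: X = X.
  apply: maxX; [exact: subsetUr | | by exists j].
  exact: leq_trans sz (subset_leq_card (subsetUr _ _)).
by rewrite -eX setU11.
Qed.

Lemma XF_outside_colN X j y : inXF F X -> mono F X j -> y \notin X ->
  exists2 x, x \in X & col F y x != j.
Proof.
move=> hX mX yX; case: (boolP [exists x in X, col F y x != j]) => [/exists_inP|/exists_inPn yXj].
  by case=> x; exists x.
case/negP: yX; apply: (XF_maximal hX (mono_setU1 mX _)) => x xX.
exact/eqP/negbNE/yXj.
Qed.

Lemma XF_not_subset X X' : inXF F X -> inXF F X' -> X <> X' ->
  exists2 q, q \in X' & q \notin X.
Proof.
move=> [szX [j mX] _] [_ _ maxX'] nXX'.
case: (boolP (X' \subset X)) => [sX'X|/subsetPn[q]]; last by exists q.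
by case: nXX'; apply: maxX' => //; exists j.
Qed.

Lemma monoP Y k :
  reflect (mono F Y k) [forall x in Y, forall y in Y, (x != y) ==> (col F x y == k)].
Proof.
apply: (iffP forall_inP) => [mY x y xY yY nxy | mY x xY].
  by move/forall_inP: (mY x xY) => /(_ y yY); rewrite nxy => /eqP.
by apply/forall_inP => y yY; apply/implyP => nxy; rewrite (mY x y xY yY nxy).
Qed.

Lemma XF_of_mono S i :
  mono F S i -> bigsize c <= #|S| -> exists X, inXF F X /\ S \subset X.
Proof.
move=> mS szS.
pose P Y := (S \subset Y) &&
  [exists k, [forall x in Y, forall y in Y, (x != y) ==> (col F x y == k)]].
have PS : P S by rewrite /P subxx; apply/existsP; exists i; apply/monoP.
case: (arg_maxnP (fun Y => #|Y|) PS) => X /andP[sSX /existsP[k /monoP mX]] maxX.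
exists X; split=> //; split; first exact: leq_trans szS (subset_leq_card sSX).
  by exists k.
move=> Y sXY _ [k' mY]; apply/eqP; rewrite eq_sym eqEcard sXY; apply: maxX.
by rewrite /P (subset_trans sSX sXY); apply/existsP; exists k'; apply/monoP.
Qed.

Lemma embeds_inj_large i t (phi : 'I_t -> {set T}) :
  bigsize c <= t -> embeds F i phi -> injective phi -> exists u, inXF F (phi u).
Proof.
move=> large emb inj; apply: NNPP => noXF.
have cardt : 6 <= #|[set: 'I_t]|.
  by rewrite cardsT card_ord; apply: leq_trans large; apply: leq_maxr.
have YF u : inYF F (phi u).
  have [w _] := exists_notin (s := [:: u]) cardt isT; rewrite inE eq_sym => nuw.
  have [[hu|//] _] := EFcol_VE (emb u w nuw).
  by case: noXF; exists u.
have [f hf] := fin_all_exists YF.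
have phif u : phi u = [set f u] by case: (hf u).
have mS : mono F (f @: setT) i.
  move=> _ _ /imsetP[a _ ->] /imsetP[b _ ->] nfab.
  have nab : a != b by apply: contraNneq nfab => ->.
  have nphi : phi a <> phi b by move/inj/eqP; apply/negP.
  by have := EFcol_YF (YF a) (YF b) nphi (emb a b nab); rewrite !phif.
have [|X [hX sSX]] := XF_of_mono mS.
  by rewrite card_imset ?cardsT ?card_ord // => a b fab; apply: inj; rewrite !phif fab.
have [u _ _] := exists_notin (s := [::]) cardt isT.
by case: (hf u) => _ /(_ X hX); rewrite (subsetP sSX) // imset_f.
Qed.

End Coloring.

Section NoK31.
Variables (T : finType) (c : nat) (F : {set T} -> 'I_c).
Hypothesis F_noK31 : ~ has_K31 F.
Implicit Types (X v w : {set T}) (x y z : T) (i j : 'I_c).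

Lemma K31_outside X j x1 x2 x3 (w : T) : mono F X j ->
  x1 \in X -> x2 \in X -> x3 \in X -> w \notin X -> x1 != x2 -> x1 != x3 -> x2 != x3 ->
  ~ K31_pattern j (col F w x1) (col F w x2) (col F w x3).
Proof.
move=> mX x1X x2X x3X wX n12 n13 n23 pat; apply: F_noK31.
exists x1, x2, x3, w; split.
- by rewrite /= !inE !negb_or n12 n13 n23 !(memNneq _ wX).
- by rewrite (mX _ _ x1X x2X n12) (mX _ _ x2X x3X n23).
- by rewrite (mX _ _ x1X x2X n12) (mX _ _ x1X x3X n13).
- by rewrite (mX _ _ x1X x2X n12).
Qed.

Lemma XF_outside_col_uniq X j y a a' : inXF F X -> mono F X j -> y \notin X ->
  a \in X -> a' \in X -> col F y a = j -> col F y a' = j -> a = a'.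
Proof.
move=> hX mX yX aX a'X yaj ya'j; apply/eqP/contraT => naa'; exfalso.
have [x xX yxj] := XF_outside_colN hX mX yX.
have nax : a != x by apply: contraNneq yxj => <-; rewrite yaj.
have na'x : a' != x by apply: contraNneq yxj => <-; rewrite ya'j.
exact: (K31_outside mX aX a'X xX yX naa' nax na'x (K31_pattern_aab yaj ya'j yxj)).
Qed.

Lemma XF_outside_bicolor X j y : inXF F X -> mono F X j -> y \notin X ->
  exists2 b, b != j & forall x, x \in X -> col F y x = b \/ col F y x = j.
Proof.
move=> hX mX yX.
have [x1 [x2 [x1X x2X n12 e12]]] := pigeonhole_ord (col F y) (XF_card_gt hX).
have bj : col F y x1 != j.
  apply: contra n12 => /eqP yx1j; apply/eqP.
  by apply: (XF_outside_col_uniq hX mX yX x1X x2X yx1j); rewrite -e12.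
exists (col F y x1) => // x xX.
case: (col F y x =P col F y x1) => [|/eqP nb]; [by left | right].
apply/eqP/contraT => nj; exfalso.
have n1 : x1 != x by apply: contraNneq nb => <-.
have n2 : x2 != x by apply: contraNneq nb => <-; rewrite e12.
apply: (K31_outside mX x1X x2X xX yX n12 n1 n2).
by rewrite -e12; apply: K31_pattern_bbd.
Qed.

Lemma XF_outside_almost X j y x0 i : inXF F X -> mono F X j -> y \notin X ->
  x0 \in X -> col F y x0 = i -> i != j -> almost_col F X i y.
Proof.
move=> hX mX yX x0X yx0i ij.
have [b bj bicol] := XF_outside_bicolor hX mX yX.
have <- : b = i.
  by case: (bicol x0 x0X); rewrite yx0i // => eij; rewrite eij eqxx in ij.
exists (odflt y [pick x in X | col F y x == j]) => x xX.
case: (bicol x xX) => [-> //|yxj]; case: pickP => [e /andP[eX /eqP yej]|none] /=.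
  by rewrite (XF_outside_col_uniq hX mX yX xX eX yxj yej) eqxx.
by move: (none x); rewrite /= xX yxj eqxx.
Qed.

Lemma almost_col_neq X j i y : inXF F X -> mono F X j -> y \notin X ->
  almost_col F X i y -> i != j.
Proof.
move=> hX mX yX [e ye]; apply/eqP => eij; subst i.
have [x1 x1X] := XF_exists_notin (s := [:: e]) hX isT; rewrite inE => x1e.
have [x2 x2X] := XF_exists_notin (s := [:: e; x1]) hX isT.
rewrite !inE negb_or => /andP[x2e x21].
by move: x21; rewrite (XF_outside_col_uniq hX mX yX x2X x1X (ye _ x2X x2e) (ye _ x1X x1e)) eqxx.
Qed.

Lemma XF_meet X X' s1 s2 : inXF F X -> inXF F X' -> X <> X' ->
  s1 \in X -> s1 \in X' -> s2 \in X -> s2 \in X' -> s1 = s2.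
Proof.
move=> hX hX' nXX' s1X s1X' s2X s2X'; apply/eqP/contraT => n12; exfalso.
have [q qX' qX] := XF_not_subset hX hX' nXX'.
have [[_ [j mX] _] [_ [j' mX'] _]] := (hX, hX').
have jj' : j' = j by rewrite -(mX _ _ s1X s2X n12) (mX' _ _ s1X' s2X' n12).
have qcol s : s \in X -> s \in X' -> col F q s = j.
  by move=> sX sX'; rewrite -jj' mX' // eq_sym (memNneq sX qX).
by move/eqP: n12; apply; apply: (XF_outside_col_uniq hX mX qX s1X s2X); apply: qcol.
Qed.

Lemma XF_meet_card X v : inXF F X -> inVE F v -> X <> v -> #|v :&: X| <= 1.
Proof.
move=> hX [hv|[y [-> _]]] nXv; last by rewrite -(cards1 y) subset_leq_card // subsetIl.
case: (set_0Vmem (v :&: X)) => [-> | [s /setIP[sv sX]]]; first by rewrite cards0.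
rewrite -(cards1 s) subset_leq_card //; apply/subsetP => p /setIP[pv pX].
by rewrite inE (XF_meet hX hv nXv pX pv sX sv).
Qed.

Lemma XF_setD_card X X' : inXF F X -> inXF F X' -> X <> X' -> 5 <= #|X' :\: X|.
Proof.
move=> hX hX' nXX'.
have := cardsID X X'; have := XF_meet_card hX (or_introl hX') nXX'.
have := XF_card hX'; lia.
Qed.

(* Counting the edges of X * v: a vertex of v outside X has at most one
   j-edge into X, and the edges inside X start from the at most one common
   vertex, so the j-edges cannot be a majority. *)
Lemma majority_XF_neq_col X j v i : inXF F X -> mono F X j -> inVE F v -> X <> v ->
  majority F X v i -> i != j.
Proof.
move=> hX mX hv nXv; apply: contraPneq => -> {i}; apply/negP; rewrite -leqNgt.
set D := v :\: X; set I := [set e in cross_edges X v | F e == j].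
pose g y := odflt y [pick x in X | col F y x == j].
have g_col y x : y \notin X -> x \in X -> col F y x = j -> x = g y.
  move=> yX xX yxj; rewrite /g; case: pickP => [x' /andP[x'X /eqP yx'j]|none] /=.
    exact: (XF_outside_col_uniq hX mX yX xX x'X yxj yx'j).
  by move: (none x); rewrite /= xX yxj eqxx.
have I_sub : I \subset [set [set g y; y] | y in D] :|: [set [set a; b] | a in X, b in v :&: X].
  apply/subsetP => e; rewrite inE => /andP[/imset2P[a b aX]].
  rewrite inE => /andP[bv nab] -> /eqP abj; apply/setUP.
  case: (boolP (b \in X)) => bX; first by right; apply/imset2P; exists a b; rewrite // inE bv.
  left; apply/imsetP; exists b; first by rewrite inE bX.
  by rewrite -(g_col b a) // col_sym.
have I_le : #|I| <= #|D| + #|X| * #|v :&: X|.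
  apply: leq_trans (subset_leq_card I_sub) _; apply: leq_trans (leq_card_setU _ _).1 _.
  by rewrite curry_imset2X -cardsX; apply: leq_add; apply: leq_imset_card.
have D5 : 0 < #|v :&: X| -> 5 <= #|D|.
  case/card_gt0P => s /setIP[sv sX]; apply: (XF_setD_card hX _ nXv).
  by case: hv => // -[y [vy yXF]]; move: sv (yXF X hX); rewrite vy inE => /eqP <-; rewrite sX.
have := card_cross_edges_setD X v; have := XF_meet_card hX hv nXv.
have := XF_card hX; move: D5 I_le; rewrite -/D.
case: (posnP #|v :&: X|) => [-> _|_ /(_ isT)]; nia.
Qed.

Lemma majority_almost X v i : inXF F X -> inVE F v -> X <> v -> majority F X v i ->
  exists2 y, y \in v :\: X & almost_col F X i y.
Proof.
move=> hX hv nXv mXv; have [_ [j mX] _] := hX.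
have ij := majority_XF_neq_col hX mX hv nXv mXv.
have : [set e in cross_edges X v | F e == i] != set0.
  by rewrite -card_gt0 lt0n; apply: contraTneq mXv => ->; rewrite muln0 ltn0.
case/set0Pn => e; rewrite inE => /andP[/imset2P[a b aX]].
rewrite inE => /andP[bv nab] -> /eqP abi.
have bX : b \notin X by apply: contra ij => bX; rewrite -abi; apply/eqP/(mX _ _ aX bX nab).
exists b; first by rewrite inE bX.
by apply: (XF_outside_almost hX mX bX aX _ ij); rewrite col_sym.
Qed.

Lemma majority_set1_almost X y i : inXF F X -> inYF F [set y] -> majority F X [set y] i ->
  y \notin X /\ almost_col F X i y.
Proof.
move=> hX hy mXy.
have nXy : X <> [set y] by move=> E; apply: (XF_notYF hX); rewrite E.
have [y' /setDP[]] := majority_almost hX (or_intror hy) nXy mXy.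
by rewrite inE => /eqP ->.
Qed.

Lemma majority_XF_almost X X' i : inXF F X -> inXF F X' -> X <> X' -> majority F X X' i ->
  exists e, forall q, q \in X' :\: X -> q != e -> almost_col F X i q.
Proof.
move=> hX hX' nXX' mXX'.
have [[_ [j mX] _] [_ [j' mX'] _]] := (hX, hX').
have ij := majority_XF_neq_col hX mX (or_introl hX') nXX' mXX'.
have ij' := majority_XF_neq_col hX' mX' (or_introl hX) (not_eq_sym nXX') (majority_sym mXX').
have [q0 /setDP[q0X' q0X] [e0 q0e0]] := majority_almost hX (or_introl hX') nXX' mXX'.
have [p /setDP[pX pX']] := exists_notin (s := [:: e0])
  (XF_setD_card hX' hX (not_eq_sym nXX')) isT.
rewrite inE => pe0.
have pq0 : col F p q0 = i by rewrite col_sym q0e0.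
have [e pe] := XF_outside_almost hX' mX' pX' q0X' pq0 ij'.
exists e => q /setDP[qX' qX] qe.
by apply: XF_outside_almost hX mX qX pX _ ij; rewrite col_sym pe.
Qed.

(* The i-edge y z and a pair x, x' of X avoiding both exceptions form an
   induced \hat K_{3,1}: the i-triangle y z x plus x', which has two i-edges
   and the j-edge x' x. *)
Lemma no_almost_col_edge X i y z : inXF F X -> y \notin X -> z \notin X -> y != z ->
  col F y z = i -> almost_col F X i y -> almost_col F X i z -> False.
Proof.
move=> hX yX zX nyz yzi ay [ez ze]; have [_ [j mX] _] := hX.
have ij := almost_col_neq hX mX yX ay; case: ay => ey ye.
have [x xX] := XF_exists_notin (s := [:: ey; ez]) hX isT.
rewrite !inE negb_or => /andP[xey xez].
have [x' x'X] := XF_exists_notin (s := [:: ey; ez; x]) hX isT.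
rewrite !inE !negb_or => /andP[x'ey /andP[x'ez x'x]].
apply: F_noK31; exists y, z, x, x'; split.
- rewrite /= !inE !negb_or nyz (eq_sym x x') x'x !(eq_sym y) !(eq_sym z).
  by rewrite !(memNneq xX, memNneq x'X).
- by rewrite yzi ze.
- by rewrite yzi ye.
- rewrite yzi; apply: K31_pattern_aab; rewrite ?(mX _ _ x'X xX x'x) 1?eq_sym //.
  + by rewrite col_sym ye.
  + by rewrite col_sym ze.
Qed.

Lemma almost_col_XF_pair X X' i y : inXF F X -> inXF F X' -> X <> X' -> majority F X X' i ->
  y \notin X -> y \notin X' -> almost_col F X i y -> almost_col F X' i y -> False.
Proof.
move=> hX hX' nXX' mXX' yX yX' ay [e' ye'].
have [e qe] := majority_XF_almost hX hX' nXX' mXX'.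
have [q qXX'] := exists_notin (s := [:: e; e']) (XF_setD_card hX hX' nXX') isT.
rewrite !inE negb_or => /andP[qe0 qe'].
have /setDP[qX' qX] := qXX'.
apply: (no_almost_col_edge hX yX qX _ (ye' q qX' qe') ay (qe q qXX' qe0)).
by rewrite eq_sym (memNneq qX' yX').
Qed.

Lemma triangle_XXY X X' y i : inXF F X -> inXF F X' -> X <> X' -> inYF F [set y] ->
  majority F X X' i -> majority F X [set y] i -> majority F X' [set y] i -> False.
Proof.
move=> hX hX' nXX' hy mXX' mXy mX'y.
have [yX ay] := majority_set1_almost hX hy mXy.
have [yX' ay'] := majority_set1_almost hX' hy mX'y.
exact: almost_col_XF_pair hX hX' nXX' mXX' yX yX' ay ay'.
Qed.

Lemma triangle_XXX X X' X'' i : inXF F X -> inXF F X' -> inXF F X'' ->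
  X <> X' -> X <> X'' -> X' <> X'' ->
  majority F X X' i -> majority F X X'' i -> majority F X' X'' i -> False.
Proof.
move=> hX hX' hX'' nXX' nXX'' nX'X'' mXX' mXX'' mX'X''.
have [e1 ae1] := majority_XF_almost hX hX'' nXX'' mXX''.
have [e2 ae2] := majority_XF_almost hX' hX'' nX'X'' mX'X''.
have card4 : 4 <= #|X'' :\: X :\: X'|.
  have := cardsID X' (X'' :\: X); have := XF_setD_card hX hX'' nXX''.
  have : #|(X'' :\: X) :&: X'| <= #|X'' :&: X'|.
    by apply: subset_leq_card; apply: setSI; apply: subsetDl.
  have := XF_meet_card hX' (or_introl hX'') nX'X''; lia.
have [r /setDP[/setDP[rX'' rX] rX']] := exists_notin (s := [:: e1; e2]) card4 isT.
rewrite !inE negb_or => /andP[re1 re2].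
apply: (almost_col_XF_pair hX hX' nXX' mXX' rX rX').
- by apply: ae1; rewrite // inE rX'' rX.
- by apply: ae2; rewrite // inE rX'' rX'.
Qed.

Lemma no_XF_triangle X v w i : inXF F X -> X <> v -> X <> w -> v <> w ->
  EFcol F X v i -> EFcol F X w i -> EFcol F v w i -> False.
Proof.
move=> hX nXv nXw nvw eXv eXw evw.
have mXv := EFcol_majority hX nXv eXv; have mXw := EFcol_majority hX nXw eXw.
have [[hv|hv] [hw|hw]] := EFcol_VE evw.
- exact: triangle_XXX hX hv hw nXv nXw nvw mXv mXw (EFcol_majority hv nvw evw).
- case: (hw) => y [wy _]; subst w.
  exact: triangle_XXY hX hv nXv hw mXv mXw (EFcol_majority hv nvw evw).
- case: (hv) => y [vy _]; subst v.
  have mwy := EFcol_majority hw (not_eq_sym nvw) (EFcol_sym evw).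
  exact: triangle_XXY hX hw nXw hv mXw mXv mwy.
- have yzi := EFcol_YF hv hw nvw evw.
  case: (hv) (hw) => y [vy _] [z [wz _]]; subst v w.
  have [yX ay] := majority_set1_almost hX hv mXv.
  have [zX az] := majority_set1_almost hX hw mXw.
  by apply: (no_almost_col_edge hX yX zX _ yzi ay az); apply: contra_not_neq nvw => ->.
Qed.

Lemma embeds_const_or_inj i t (phi : 'I_t -> {set T}) :
  embeds F i phi -> (forall a b, phi a = phi b) \/ injective phi.
Proof.
move=> emb.
case: (boolP [exists u, exists w, (u != w) && (phi u == phi w)]); last first.
  move/existsPn => noloop; right => u w; apply: contra_eq => nuw.
  by move/existsPn: (noloop u) => /(_ w); rewrite nuw.
case/existsP => u /existsP[w /andP[nuw /eqP euw]].
have := emb u w nuw; rewrite -euw => /EFcol_loop[hX mX].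
suff all_u k : phi k = phi u by left => a b; rewrite !all_u.
case: (phi u =P phi k) => [//|nuk].
have nuk' : u != k by apply: contra_not_neq nuk => ->.
have emk := emb u k nuk'; have [_ hk] := EFcol_VE emk.
by move: (majority_XF_neq_col hX mX hk nuk (EFcol_majority hX nuk emk)); rewrite eqxx.
Qed.

Lemma embeds_inj_XF i t (phi : 'I_t -> {set T}) u :
  2 < t -> embeds F i phi -> injective phi -> inXF F (phi u) -> False.
Proof.
move=> t3 emb inj hX.
have neq a b : a != b -> phi a <> phi b by move=> nab /inj/eqP; rewrite (negbTE nab).
have cardt : 3 <= #|[set: 'I_t]| by rewrite cardsT card_ord.
have [v _] := exists_notin (s := [:: u]) cardt isT; rewrite inE eq_sym => nuv.
have [w _] := exists_notin (s := [:: u; v]) cardt isT.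
rewrite !inE negb_or ![w == _]eq_sym => /andP[nuw nvw].
exact: no_XF_triangle hX (neq _ _ nuv) (neq _ _ nuw) (neq _ _ nvw) (emb _ _ nuv)
  (emb _ _ nuw) (emb _ _ nvw).
Qed.

End NoK31.

Theorem claim5p5 (T : finType) (c : nat) (F : {set T} -> 'I_c) :
  2 <= c -> standard F ->
  forall i : 'I_c,
    (forall phi : 'I_(maxn c.+1 6) -> {set T},
        embeds F i phi -> forall u w, phi u = phi w)
    /\
    (forall phi : 'I_3 -> {set T},
        embeds F i phi -> (exists u, inXF F (phi u)) -> forall u w, phi u = phi w).
Proof.
move=> _ [noK31 _] i; split=> [phi emb | phi emb [u0 hX]].
  case: (embeds_const_or_inj noK31 emb) => [//|inj]; exfalso.
  have [u0 hX] := embeds_inj_large (leqnn _) emb inj.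
  by apply: (embeds_inj_XF noK31 _ emb inj hX); apply: leq_trans (leq_maxr _ _).
case: (embeds_const_or_inj noK31 emb) => [//|inj].
by case: (embeds_inj_XF noK31 (t := 3) isT emb inj hX).
Qed.
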